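(* Let $G^0,G^1,G^2$ be finite-dimensional complex vector spaces with $\dim G^1\ge1$. For a subspace $E\subset\mathrm{Hom}(G^0,G^1)$, define $$\phi_E:E\times\mathrm{Hom}(G^1,G^2)\to\mathrm{Hom}(G^0,G^2),\qquad(\alpha,\beta)\mapsto\beta\circ\alpha.$$ Let $p=\left\lfloor\frac{\dim G^1-1}{\dim G^0}\right\rfloor+1$. If $\dim G^0>1$, then for every integer $k$ with $3p\le k\le\dim\mathrm{Hom}(G^0,G^1)$ and every $E$ in a nonempty Zariski open subset of $G(k,\mathrm{Hom}(G^0,G^1))$, we have $\mathrm{Symm}(\phi_E)=\{0\}$.
   Context: For a bilinear map $B:E\times F\to G$, define $$\mathrm{Symm}(B)=\{q\in\mathrm{Hom}(E,F): B(\alpha,q(\alpha'))=B(\alpha',q(\alpha))\ \forall\alpha,\alpha'\in E\}.$$ Thus $\mathrm{Symm}(\phi_E)$ is the set of $q\in\mathrm{Hom}(E,\mathrm{Hom}(G^1,G^2))$ with $q(\alpha')\circ\alpha=q(\alpha)\circ\alpha'$ for all $\alpha,\alpha'\in E$. *)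

(* Complex numbers are modelled as R[i] for an arbitrary
   R : realType (every realType is a complete archimedean ordered field,
   i.e. isomorphic to the reals, so R[i] is the field of complex numbers). *)
From HB Require Import structures.
From mathcomp Require Import all_boot all_order all_algebra.
From mathcomp Require Import reals complex mpoly.

Set Implicit Arguments.
Unset Strict Implicit.
Unset Printing Implicit Defensive.

Import GRing.Theory.
Local Open Scope ring_scope.

Definition Symm (K : fieldType) (E F : vectType K) (G : Type)
  (B : E -> F -> G) : 'Hom(E, F) -> Prop :=
  fun q => forall a a' : E, B a (q a') = B a' (q a).

(* Convention: G^0 = K^n0, G^1 = K^n1, G^2 = K^n2 (column vectors), so that
   Hom(G^i, G^j) = 'M_(nj, ni) and composition beta o alpha = beta *m alpha. *)
Definition phi (K : fieldType) (n0 n1 n2 : nat) (E : {vspace 'M[K]_(n1, n0)})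
  : subvs_of E -> 'M[K]_(n2, n1) -> 'M[K]_(n2, n0) :=
  fun alpha beta => beta *m vsval alpha.

Definition rowspan_Hom (K : fieldType) (k n0 n1 : nat)
  (M : 'M[K]_(k, n1 * n0)) : {vspace 'M[K]_(n1, n0)} :=
  <<[seq vec_mx (row i M) | i <- enum 'I_k]>>%VS.

(* "Every E in some nonempty Zariski open subset of the Grassmannian
   G(k, Hom(G^0,G^1)) satisfies Pr".  Via the quotient map from the open set
   of full-rank k x N matrices (N = n1*n0) onto G(k, N) (an open, surjective
   morphism), this is expressed as: there is a nonzero polynomial P in the
   k*N matrix entries such that every k x N matrix M with P(M) <> 0 has full
   rank k and its row space E satisfies Pr. *)
Definition generic_in_Grass (K : fieldType) (k n0 n1 : nat)
  (Pr : {vspace 'M[K]_(n1, n0)} -> Prop) : Prop :=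
  exists P : {mpoly K[k * (n1 * n0)]},
    P != 0 /\
    forall M : 'M[K]_(k, n1 * n0),
      P.@[fun i => mxvec M 0 i] != 0 ->
      (\dim (rowspan_Hom M) = k)%N /\ Pr (rowspan_Hom M).

From HB Require Import structures.
From mathcomp Require Import all_boot all_order all_algebra.
From mathcomp Require Import reals complex mpoly.
From mathcomp Require Import zify.

(* Write E as the row space of a k x (n1 n0) matrix M with rows A_1, ..., A_k.
   Row by row, an element of Symm(phi_E) is a family of rows v_1, ..., v_k with
   v_j A_i = v_i A_j, so Symm(phi_E) = 0 as soon as the linear map
   V |-> (v_j A_i - v_i A_j)_(i,j) is injective.  This condition and
   dim E = k are row-freeness conditions, which follow from the nonvanishing
   of the Gram determinants det (A A^T), polynomials in the entries of M.
   Over a real field a row-free matrix has nonzero Gram determinant, so each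
   polynomial is nonzero as soon as one real matrix satisfies the condition:
   the partial identity for dim E = k, and for injectivity the matrix with
   A_(3t+x) = J_t X_x (t < p, x < 3), where J_t picks the t-th block of n0
   coordinates of G^1, X_0 = 1, X_1 = diag(0, ..., n0-1) and X_2 is the
   cyclic shift.  There, the relations between the indices 3s, 3s+2, 3t,
   3t+1 give v_(3s) J_t (X_2 X_1 - X_1 X_2) = 0, and this commutator is
   invertible. *)

Set Implicit Arguments.
Unset Strict Implicit.
Unset Printing Implicit Defensive.
Import GRing.Theory Num.Theory.
Local Open Scope ring_scope.

Lemma mulmx_tr_self_eq0 (R : realDomainType) n (u : 'rV[R]_n) :
  (u *m u^T == 0) = (u == 0).
Proof.
apply/idP/idP => [/eqP uu0|/eqP ->]; last by rewrite mul0mx.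
have /eqP := congr1 (fun A : 'M_1 => A 0 0) uu0; rewrite !mxE.
under eq_bigr do rewrite mxE -expr2.
move=> /eqP /psumr_eq0P u0; apply/eqP/rowP => i; rewrite mxE.
by apply/eqP; rewrite -sqrf_eq0 u0 // => j _; exact: sqr_ge0.
Qed.

Lemma det_gram_neq0 (R : realFieldType) m n (A : 'M[R]_(m, n)) :
  row_free A -> \det (A *m A^T) != 0.
Proof.
move=> freeA; apply/det0P => -[v /negP nz0 vAA0]; apply: nz0.
rewrite -(mulmx_free_eq0 _ freeA) -mulmx_tr_self_eq0 trmx_mul mulmxA.
by rewrite -(mulmxA v) vAA0 mul0mx.
Qed.

Lemma row_free_det_gram (K : fieldType) m n (A : 'M[K]_(m, n)) :
  \det (A *m A^T) != 0 -> row_free A.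
Proof.
rewrite -unitfE -unitmxE -row_free_unit -!row_leq_rank => /leq_trans; apply.
exact: mxrankM_maxl.
Qed.

Lemma det_gram_map_neq0 (R : realFieldType) (L : fieldType) (f : {rmorphism R -> L})
    m n (A : 'M[R]_(m, n)) :
  row_free A -> \det (map_mx f A *m (map_mx f A)^T) != 0.
Proof. by rewrite map_trmx -map_mxM det_map_mx fmorph_eq0; exact: det_gram_neq0. Qed.

Section SymmDefect.
Variables (R : comNzRingType) (k n0 n1 : nat).

Definition row_Hom (M : 'M[R]_(k, n1 * n0)) (i : 'I_k) : 'M[R]_(n1, n0) :=
  vec_mx (row i M).

Definition symm_defect (M : 'M[R]_(k, n1 * n0)) (V : 'M[R]_(k, n1)) :
    'M[R]_(k, k * n0) :=
  \matrix_i mxvec (\matrix_j (row j V *m row_Hom M i - row i V *m row_Hom M j)).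

Lemma symm_defect_eq0P M V :
  reflect (forall i j, row j V *m row_Hom M i = row i V *m row_Hom M j)
          (symm_defect M V == 0).
Proof.
apply: (iffP eqP) => [V0 i j|sym].
  have /eqP := congr1 (row j \o vec_mx \o row i) V0.
  by rewrite /= rowK mxvecK rowK !linear0 subr_eq0 => /eqP.
apply/row_matrixP => i; rewrite rowK row0 -(linear0 mxvec); congr mxvec.
by apply/row_matrixP => j; rewrite rowK row0 sym subrr.
Qed.

Fact symm_defect_is_linear M : linear (symm_defect M).
Proof.
move=> a U W; apply/row_matrixP => i.
rewrite [RHS]linearP /= !rowK -linearP; congr mxvec.
apply/row_matrixP => j; rewrite [RHS]linearP /= !rowK !linearP /=.
by rewrite !mulmxDl -!scalemxAl scalerBr addrACA opprD.
Qed.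

HB.instance Definition _ M := GRing.isLinear.Build R 'M_(k, n1) 'M_(k, k * n0) _
  (symm_defect M) (symm_defect_is_linear M).

Definition symm_defect_mx M : 'M[R]_(k * n1, k * (k * n0)) := lin_mx (symm_defect M).

End SymmDefect.

Section SymmDefectMap.
Variables (R S : comNzRingType) (f : {rmorphism R -> S}) (k n0 n1 : nat).

Lemma map_symm_defect (M : 'M[R]_(k, n1 * n0)) V :
  map_mx f (symm_defect M V) = symm_defect (map_mx f M) (map_mx f V).
Proof.
apply/row_matrixP => i; rewrite -map_row !rowK map_mxvec; congr mxvec.
apply/row_matrixP => j; rewrite -map_row !rowK map_mxB !map_mxM.
by rewrite /row_Hom !map_vec_mx !map_row.
Qed.

Lemma map_symm_defect_mx (M : 'M[R]_(k, n1 * n0)) :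
  map_mx f (symm_defect_mx M) = symm_defect_mx (map_mx f M).
Proof.
apply/matrixP => r x; rewrite !mxE /=.
by rewrite -[in RHS](map_delta_mx f) -map_vec_mx -map_symm_defect -map_mxvec mxE.
Qed.

End SymmDefectMap.

Lemma row_free_symm_defect_mx (K : fieldType) k n0 n1 (M : 'M[K]_(k, n1 * n0)) :
  reflect (forall V, symm_defect M V = 0 -> V = 0) (row_free (symm_defect_mx M)).
Proof.
apply: (iffP idP) => [freeS V SV0|Sinj].
  by apply/eqP; rewrite -mxvec_eq0 -(mulmx_free_eq0 _ freeS) mul_vec_lin /= SV0 linear0.
apply: inj_row_free => v; rewrite -[v]vec_mxK mul_vec_lin /= => /eqP.
by rewrite mxvec_eq0 => /eqP /Sinj ->; rewrite linear0.
Qed.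

Lemma dim_rowspan_Hom (K : fieldType) k n0 n1 (M : 'M[K]_(k, n1 * n0)) :
  row_free M -> \dim (rowspan_Hom M) = k.
Proof.
move=> freeM; transitivity (size [tuple row_Hom M i | i < k]); last exact: size_tuple.
apply/eqP/(@freeP _ _ _ [tuple row_Hom M i | i < k]) => c sum0 i.
have /eqP : \row_j c j *m M = 0.
  apply: (can_inj vec_mxK); rewrite linear0 -{}sum0 mulmx_sum_row linear_sum.
  by apply: eq_bigr => j _; rewrite linearZ mxE -tnth_nth tnth_mktuple.
by rewrite mulmx_free_eq0 // => /eqP/rowP/(_ i); rewrite !mxE.
Qed.

Lemma lfun_subvs_span_eq0 (K : fieldType) (vT wT : vectType K) (X : seq vT)
    (q : 'Hom(subvs_of <<X>>%VS, wT)) :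
  (forall x, x \in X -> q (vsproj <<X>>%VS x) = 0) -> q = 0.
Proof.
move=> qX0; apply/lfunP => y; rewrite zero_lfunE -[y]vsvalK.
have /span_lfunP qX : {in X, (q \o linfun (vsproj <<X>>%VS))%VF =1 (0 : 'Hom(vT, wT))}.
  by move=> x Xx; rewrite comp_lfunE lfunE /= zero_lfunE qX0.
by have := qX _ (subvsP y); rewrite comp_lfunE lfunE zero_lfunE.
Qed.

Lemma Symm_phi_rowspan_eq0 (K : fieldType) k n0 n1 n2 (M : 'M[K]_(k, n1 * n0))
    (q : 'Hom(subvs_of (rowspan_Hom M), 'M[K]_(n2, n1))) :
  (forall V, symm_defect M V = 0 -> V = 0) ->
  Symm (@phi K n0 n1 n2 (rowspan_Hom M)) q -> q = 0.
Proof.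
move=> Sinj symq; apply: lfun_subvs_span_eq0 => _ /mapP [j _ ->].
pose a i := vsproj (rowspan_Hom M) (row_Hom M i).
have aK i : vsval (a i) = row_Hom M i.
  by rewrite vsprojK // memv_span // map_f // mem_enum.
apply/row_matrixP => b; rewrite row0.
pose V := \matrix_i row b (q (a i)).
suff /Sinj V0 : symm_defect M V = 0.
  by rewrite -(rowK (fun i => row b (q (a i))) j) -/V V0 row0.
apply/eqP/symm_defect_eq0P => i l; rewrite !rowK -!aK -!row_mul; congr row; exact: symq.
Qed.

Lemma ordS_neq n (i : 'I_n) : (1 < n)%N -> ordS i != i.
Proof.
move=> n_gt1; apply/eqP => /(congr1 val) /=; have := ltn_ord i.
rewrite leq_eqVlt => /orP [/eqP Si_n|Si_lt]; last by rewrite modn_small //; lia.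
by rewrite Si_n modnn; lia.
Qed.

Section Witness.
Variables (R : numFieldType) (n0 : nat).
Hypothesis n0_gt1 : (1 < n0)%N.

Definition shift_mx : 'M[R]_n0 := \matrix_(i, j) (j == ordS i)%:R.
Definition diag_nat_mx : 'M[R]_n0 := diag_mx (\row_i (i : nat)%:R).

Lemma mul_shift_mx (a : 'rV[R]_n0) i : (a *m shift_mx) 0 (ordS i) = a 0 i.
Proof.
rewrite mxE (bigD1 i) //= mxE eqxx mulr1 big1 ?addr0 // => l l_neq_i.
by rewrite mxE (inj_eq (@ordS_inj _)) eq_sym (negPf l_neq_i) mulr0.
Qed.

Lemma mul_diag_nat_mx (a : 'rV[R]_n0) i : (a *m diag_nat_mx) 0 i = a 0 i * i%:R.
Proof. by rewrite mul_mx_diag !mxE. Qed.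

Lemma row_free_shift_diag_commutator :
  row_free (shift_mx *m diag_nat_mx - diag_nat_mx *m shift_mx).
Proof.
apply: inj_row_free => a /eqP; rewrite mulmxBr subr_eq0 !mulmxA => /eqP /rowP aCD.
apply/rowP => i; have /eqP := aCD (ordS i).
rewrite !mul_diag_nat_mx !mul_shift_mx mul_diag_nat_mx -subr_eq0 -mulrBr mulf_eq0.
by rewrite subr_eq0 eqr_nat val_eqE (negPf (ordS_neq i n0_gt1)) orbF mxE => /eqP.
Qed.

Variables (n1 p : nat).
Hypothesis n1_le : (n1 <= p * n0)%N.

Definition chunk_mx (t : nat) : 'M[R]_(n1, n0) :=
  \matrix_(b, c) (b == t * n0 + c :> nat)%N%:R.

Lemma chunk_mx_cover (v : 'rV[R]_n1) :
  (forall t, (t < p)%N -> v *m chunk_mx t = 0) -> v = 0.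
Proof.
move=> v_chunk0; apply/rowP => b; rewrite mxE.
have n0_gt0 : (0 < n0)%N by apply: ltnW.
have b_div : (b %/ n0 < p)%N by rewrite ltn_divLR // (leq_trans (ltn_ord b)).
have /rowP/(_ (Ordinal (ltn_pmod b n0_gt0))) := v_chunk0 _ b_div.
rewrite !mxE (bigD1 b) //= big1 => [|b' b'_neq_b]; rewrite mxE /= -divn_eq.
  by rewrite eqxx mulr1 addr0.
by rewrite val_eqE (negPf b'_neq_b) mulr0.
Qed.

Definition witness_factor (x : nat) : 'M[R]_n0 :=
  if x == 0%N then 1%:M else if x == 1%N then diag_nat_mx else shift_mx.

Definition witness_Hom (i : nat) : 'M[R]_(n1, n0) :=
  if (i < 3 * p)%N then chunk_mx (i %/ 3) *m witness_factor (i %% 3) else 0.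

Lemma witness_Hom_block s y : (s < p)%N -> (y < 3)%N ->
  witness_Hom (3 * s + y) = chunk_mx s *m witness_factor y.
Proof.
move=> s_lt y_lt; rewrite /witness_Hom ifT; last by lia.
by rewrite mulnC divnMDl // modnMDl divn_small // modn_small // addn0.
Qed.

Variable k : nat.
Hypothesis k_ge : (3 * p <= k)%N.

Lemma witness_rows_eq0 (u : nat -> 'rV[R]_n1) :
  (forall i j, (i < k)%N -> (j < k)%N -> u j *m witness_Hom i = u i *m witness_Hom j) ->
  forall j, (j < k)%N -> u j = 0.
Proof.
move=> u_sym j j_lt; apply: chunk_mx_cover => t t_lt.
have rel s y r x : (s < p)%N -> (y < 3)%N -> (r < p)%N -> (x < 3)%N ->
    u (3 * s + y)%N *m chunk_mx r *m witness_factor x =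
    u (3 * r + x)%N *m chunk_mx s *m witness_factor y.
  by move=> *; rewrite -!mulmxA -!witness_Hom_block //; apply: u_sym; lia.
have first_rows0 s r : (s < p)%N -> (r < p)%N -> u (3 * s) *m chunk_mx r = 0.
  move=> s_lt r_lt; apply/eqP.
  rewrite -(mulmx_free_eq0 _ row_free_shift_diag_commutator) mulmxBr !mulmxA.
  have := rel s 0 r 0; have := rel s 2 r 0; have := rel s 0 r 1; have := rel s 2 r 1.
  rewrite /witness_factor /= !addn0 !mulmx1 => e21 e01 e20 e00.
  by rewrite e00 // -e20 // e21 // -e01 // -e00 // subrr.
have [j_lt3p|j_ge3p] := ltnP j (3 * p).
  have j_div : (j %/ 3 < p)%N by rewrite ltn_divLR // mulnC.
  have j_mod : (j %% 3 < 3)%N by rewrite ltn_mod.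
  have := rel (j %/ 3)%N (j %% 3)%N t 0 j_div j_mod t_lt isT.
  rewrite mulnC -divn_eq /witness_factor /= addn0 !mulmx1 => ->.
  by rewrite first_rows0 ?mul0mx.
have := u_sym (3 * t)%N j ltac:(lia) j_lt.
rewrite -[(3 * t)%N]addn0 witness_Hom_block // /witness_Hom ltnNge j_ge3p /= mulmx0.
by rewrite /witness_factor /= mulmxA mulmx1.
Qed.

Definition witness_mx : 'M[R]_(k, n1 * n0) := \matrix_(i < k) mxvec (witness_Hom i).

Lemma row_free_witness_symm_defect_mx : row_free (symm_defect_mx witness_mx).
Proof.
apply/row_free_symm_defect_mx => V /eqP/symm_defect_eq0P V_sym.
pose u j := oapp (fun i => row i V) 0 (insub j : option 'I_k).
have uE (i : 'I_k) : u i = row i V by rewrite /u valK.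
apply/row_matrixP => j; rewrite row0 -uE; apply: witness_rows_eq0 => // i l i_lt l_lt.
by have := V_sym (Ordinal i_lt) (Ordinal l_lt); rewrite /row_Hom !rowK !mxvecK -!uE.
Qed.

End Witness.

Section MatrixOfVariables.
Variables (K : comNzRingType) (m n : nat).

Definition mx_vars : 'M[{mpoly K[m * n]}]_(m, n) := vec_mx (\row_i 'X_i).

Lemma map_mx_vars_meval (M : 'M[K]_(m, n)) :
  map_mx (meval (fun i => mxvec M 0 i)) mx_vars = M.
Proof.
rewrite map_vec_mx -[RHS]mxvecK; congr vec_mx.
by apply/rowP => i; rewrite !mxE mevalXU.
Qed.

End MatrixOfVariables.

Lemma meval_det_gram (K : comNzRingType) N m n (T : 'M[{mpoly K[N]}]_(m, n)) v :
  (\det (T *m T^T)).@[v] = \det (map_mx (meval v) T *m (map_mx (meval v) T)^T).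
Proof. by rewrite -det_map_mx map_mxM map_trmx. Qed.

Lemma mpoly_neq0_meval (K : comNzRingType) N (P : {mpoly K[N]}) v : P.@[v] != 0 -> P != 0.
Proof. by apply: contraNneq => ->; rewrite meval0. Qed.

Theorem mainTheorem4 (R : realType) (n0 n1 n2 : nat) :
  (1 <= n1)%N -> (1 < n0)%N ->
  let p := ((n1 - 1) %/ n0 + 1)%N in
  forall k : nat, (3 * p <= k)%N -> (k <= n1 * n0)%N ->
  @generic_in_Grass R[i] k n0 n1
    (fun E => forall q : 'Hom(subvs_of E, 'M[R[i]]_(n2, n1)),
        Symm (@phi R[i] n0 n1 n2 E) q -> q = 0).
Proof.
move=> n1_ge1 n0_gt1 p k k_ge k_le.
have n1_le : (n1 <= p * n0)%N.
  by have := ltn_ceil (n1 - 1) (ltnW n0_gt1); rewrite /p addn1; lia.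
pose X := mx_vars R[i] k (n1 * n0).
pose S := symm_defect_mx X.
exists (\det (X *m X^T) * \det (S *m S^T)); split.
  rewrite mulf_neq0 //.
    apply: (@mpoly_neq0_meval _ _ _ (fun i => mxvec (pid_mx k) 0 i)).
    rewrite meval_det_gram map_mx_vars_meval -(map_pid_mx (real_complex R)).
    by apply: det_gram_map_neq0; rewrite -row_leq_rank rank_pid_mx.
  pose W := map_mx (real_complex R) (witness_mx R n0 n1 p k).
  apply: (@mpoly_neq0_meval _ _ _ (fun i => mxvec W 0 i)).
  rewrite meval_det_gram map_symm_defect_mx map_mx_vars_meval -map_symm_defect_mx.
  exact/det_gram_map_neq0/row_free_witness_symm_defect_mx.
move=> M; rewrite mevalM mulf_eq0 negb_or !meval_det_gram map_symm_defect_mx.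
rewrite map_mx_vars_meval => /andP [/row_free_det_gram M_free].
move=> /row_free_det_gram /row_free_symm_defect_mx S_inj.
by split; [exact: dim_rowspan_Hom | move=> q; exact: Symm_phi_rowspan_eq0].
Qed.
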